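(* Let $\mathbb S^1=\{z\in\mathbb C:|z|=1\}$, let $f:\mathbb S^1\to\mathbb S^1$ be $f(z)=z^2$, let $\rho(z)=e^{i\alpha}z$ with $\alpha/2\pi$ irrational, and let $g=\rho\circ f$. If $d$ is any metric on $\mathbb S^1$ inducing the standard topology of $\mathbb S^1$, then $\mathrm{Lip}(f,d)>1$ and $\mathrm{Lip}(g,d)>1$.
   Context: For a self-map $f$ of a metric space $(\mathbb X,d)$, $\mathrm{Lip}(f,d)=\sup_{x\neq y} d(f(x),f(y))/d(x,y)$. *)

From Stdlib Require Import Reals QArith.
From Coquelicot Require Import Coquelicot.
Open Scope R_scope.

Definition S1 (z : C) : Prop := Cmod z = 1.

Definition is_metric_on (A : C -> Prop) (d : C -> C -> R) : Prop :=
  (forall x y, A x -> A y -> 0 <= d x y) /\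
  (forall x y, A x -> A y -> (d x y = 0 <-> x = y)) /\
  (forall x y, A x -> A y -> d x y = d y x) /\
  (forall x y z, A x -> A y -> A z -> d x z <= d x y + d y z).

Definition d_open (A : C -> Prop) (d : C -> C -> R) (U : C -> Prop) : Prop :=
  forall x, U x -> exists eps, 0 < eps /\
    forall y, A y -> d x y < eps -> U y.

Definition std_open (A : C -> Prop) (U : C -> Prop) : Prop :=
  forall x, U x -> exists eps, 0 < eps /\
    forall y, A y -> Cmod (Cminus y x) < eps -> U y.

Definition induces_std_topology (A : C -> Prop) (d : C -> C -> R) : Prop :=
  forall U : C -> Prop, (forall x, U x -> A x) ->
    (d_open A d U <-> std_open A U).

Definition Lip_on (A : C -> Prop) (f : C -> C) (d : C -> C -> R) : Rbar :=
  Lub_Rbar (fun r => exists x y, A x /\ A y /\ x <> y /\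
                                 r = d (f x) (f y) / d x y).

Definition sqmap (z : C) : C := Cmult z z.
Definition rot (alpha : R) (z : C) : C := Cmult (cos alpha, sin alpha) z.
Definition gmap (alpha : R) (z : C) : C := rot alpha (sqmap z).

Definition irrational (x : R) : Prop := forall q : Q, x <> Q2R q.

(* Both maps are conjugate, by a rotation fixing a point p of the circle, to
   w |-> w^2, so the points x_n = p e^{i pi / 2^n} satisfy h(x_{n+1}) = x_n
   and x_n -> p.  If Lip(h, d) <= 1, nonexpansiveness at the fixed point p
   gives d(p, x_0) <= d(p, x_1) <= ..., while d(p, x_n) -> 0 because d induces
   the standard topology; as x_0 = -p <> p this is absurd. *)

From Stdlib Require Import Reals QArith Lra Classical.
From Coquelicot Require Import Coquelicot.
Open Scope R_scope.

Section MetricInducingTopology.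

Variables (A : C -> Prop) (d : C -> C -> R).
Hypothesis d_metric : is_metric_on A d.

Lemma metric_refl x : A x -> d x x = 0.
Proof. intro Ax. now apply (proj1 (proj2 d_metric) x x Ax Ax). Qed.

Lemma metric_pos x y : A x -> A y -> x <> y -> 0 < d x y.
Proof.
  intros Ax Ay xy. destruct d_metric as [d_ge0 [d_eq0 _]].
  destruct (d_ge0 x y Ax Ay) as [? | dxy0]; [assumption |].
  exfalso. apply xy, (d_eq0 x y Ax Ay). now symmetry.
Qed.

Lemma Lip_on_le_1_nonexpansive (h : C -> C) :
  (forall x, A x -> A (h x)) -> Rbar_le (Lip_on A h d) 1 ->
  forall x y, A x -> A y -> d (h x) (h y) <= d x y.
Proof.
  intros hA Lip_le1 x y Ax Ay.
  destruct (classic (x = y)) as [<- | xy].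
  { rewrite !metric_refl by auto. lra. }
  assert (dxy_pos := metric_pos x y Ax Ay xy).
  assert (ratio_le1 : Rbar_le (d (h x) (h y) / d x y) 1).
  { apply Rbar_le_trans with (2 := Lip_le1).
    apply (proj1 (Lub_Rbar_correct _)).
    now exists x, y. }
  simpl in ratio_le1.
  replace (d (h x) (h y)) with (d (h x) (h y) / d x y * d x y) by (field; lra).
  nra.
Qed.

Hypothesis d_std : induces_std_topology A d.

Lemma std_close_metric_close p c : A p -> 0 < c ->
  exists eps, 0 < eps /\ forall y, A y -> Cmod (Cminus y p) < eps -> d p y < c.
Proof.
  intros Ap c_pos.
  set (ball := fun y => A y /\ d p y < c).
  assert (ball_open : d_open A d ball).
  { intros y [Ay dy]. exists (c - d p y). split; [lra |].
    intros z Az dyz. split; [assumption |].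
    pose proof (proj2 (proj2 (proj2 d_metric)) p y z Ap Ay Az). lra. }
  apply d_std in ball_open; [| now intros y []].
  destruct (ball_open p) as [eps [eps_pos close_in_ball]].
  { split; [assumption |]. rewrite metric_refl by assumption. lra. }
  exists eps. split; [assumption |].
  intros y Ay py. now apply close_in_ball.
Qed.

Lemma Lip_on_gt_1_of_backward_orbit (h : C -> C) (p : C) (x : nat -> C) :
  (forall z, A z -> A (h z)) -> A p -> h p = p ->
  (forall n, A (x n)) -> (forall n, h (x (S n)) = x n) -> x O <> p ->
  (forall eps, 0 < eps -> exists n, Cmod (Cminus (x n) p) < eps) ->
  Rbar_lt 1 (Lip_on A h d).
Proof.
  intros hA Ap hp xA x_back x0p x_acc.
  apply Rbar_not_le_lt. intro Lip_le1.
  assert (dist_grows : forall n, d p (x O) <= d p (x n)).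
  { induction n as [| n IH]; [lra |].
    pose proof (Lip_on_le_1_nonexpansive h hA Lip_le1 p (x (S n)) Ap (xA _))
      as step.
    rewrite hp, x_back in step. lra. }
  assert (d0_pos : 0 < d p (x O)) by (apply metric_pos; auto).
  destruct (std_close_metric_close p (d p (x O)) Ap d0_pos)
    as [eps [eps_pos close]].
  destruct (x_acc eps eps_pos) as [n xn_close].
  specialize (close (x n) (xA n) xn_close).
  specialize (dist_grows n). lra.
Qed.

End MetricInducingTopology.

Definition expi (t : R) : C := (cos t, sin t).

Lemma Cmod_expi t : Cmod (expi t) = 1.
Proof.
  unfold Cmod, expi; simpl.
  rewrite <- sqrt_1 at 3. f_equal.
  pose proof (sin2_cos2 t) as pythagoras. unfold Rsqr in pythagoras. lra.
Qed.

Lemma expi_add a b : Cmult (expi a) (expi b) = expi (a + b).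
Proof.
  unfold expi. rewrite cos_plus, sin_plus.
  apply injective_projections; simpl; ring.
Qed.

Lemma expi_opp_r a : Cmult (expi a) (expi (- a)) = 1.
Proof. rewrite expi_add, Rplus_opp_r. unfold expi. now rewrite cos_0, sin_0. Qed.

(* The chord from [1] to [e^{it}] has length [2 sin (t/2) < t]. *)
Lemma Cmod_expi_sub_1_lt t : 0 < t <= PI -> Cmod (Cminus (expi t) 1) < t.
Proof.
  intros [t_pos t_le_PI].
  assert (sin_half_pos : 0 < sin (t / 2)) by (apply sin_gt_0; lra).
  assert (sin_half_lt : sin (t / 2) < t / 2) by (apply sin_lt_x; lra).
  assert (chord2 : (cos t - 1) ^ 2 + sin t ^ 2 = 4 * sin (t / 2) ^ 2).
  { replace t with (2 * (t / 2)) at 1 2 by field.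
    rewrite cos_2a_sin, sin_2a.
    pose proof (sin2_cos2 (t / 2)) as pythagoras. unfold Rsqr in pythagoras.
    nra. }
  unfold Cmod, expi; simpl.
  apply Rlt_le_trans with (sqrt (t ^ 2)).
  - apply sqrt_lt_1_alt. split; nra.
  - rewrite sqrt_pow2 by lra. apply Rle_refl.
Qed.

Lemma exists_halved_angle_lt eps : 0 < eps -> exists n, PI * (/ 2) ^ n < eps.
Proof.
  intro eps_pos. pose proof PI_RGT_0.
  destruct (pow_lt_1_zero (/ 2) ltac:(rewrite Rabs_pos_eq; lra) (eps / PI))
    as [n small]; [now apply Rdiv_lt_0_compat |].
  exists n. specialize (small n (le_n n)).
  rewrite Rabs_pos_eq in small by (apply pow_le; lra).
  apply (Rmult_lt_compat_l PI) in small; [| lra].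
  now replace (PI * (eps / PI)) with eps in small by (field; lra).
Qed.

Lemma halved_angle_le_PI n : 0 < PI * (/ 2) ^ n <= PI.
Proof.
  pose proof PI_RGT_0.
  assert (0 < (/ 2) ^ n) by (apply pow_lt; lra).
  assert ((/ 2) ^ n <= 1).
  { destruct n as [| n]; [simpl; lra |].
    apply Rlt_le, pow_lt_1_compat; [lra | apply Nat.lt_0_succ]. }
  nra.
Qed.

Lemma Cmod_unit_mul_sub p z : Cmod p = 1 ->
  Cmod (Cminus (Cmult p z) p) = Cmod (Cminus z 1).
Proof.
  intro p_unit.
  replace (Cminus (Cmult p z) p) with (Cmult p (Cminus z 1)) by ring.
  now rewrite Cmod_mult, p_unit, Rmult_1_l.
Qed.

Lemma Lip_on_S1_gt_1_of_square_conjugate (h : C -> C) (p : C) (d : C -> C -> R) :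
  is_metric_on S1 d -> induces_std_topology S1 d ->
  (forall z, S1 z -> S1 (h z)) -> S1 p ->
  (forall w, h (Cmult p w) = Cmult p (Cmult w w)) ->
  Rbar_lt 1 (Lip_on S1 h d).
Proof.
  intros d_metric d_std hS1 p_unit h_conj.
  set (angle n := PI * (/ 2) ^ n).
  set (x n := Cmult p (expi (angle n))).
  assert (x_close : forall n, Cmod (Cminus (x n) p) < angle n).
  { intro n. unfold x. rewrite Cmod_unit_mul_sub by assumption.
    apply Cmod_expi_sub_1_lt, halved_angle_le_PI. }
  apply (Lip_on_gt_1_of_backward_orbit S1 d d_metric d_std h p x hS1 p_unit).
  - replace p with (Cmult p 1) at 1 by ring.
    rewrite h_conj. ring.
  - intro n. unfold S1, x. now rewrite Cmod_mult, Cmod_expi, p_unit, Rmult_1_l.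
  - intro n. unfold x. rewrite h_conj, expi_add.
    do 2 f_equal. unfold angle. simpl. field.
  - intro x0p.
    assert (chord0 : Cmod (Cminus (expi PI) 1) = 0).
    { rewrite <- (Cmod_unit_mul_sub p) by assumption.
      replace PI with (angle O) by (unfold angle; simpl; ring).
      fold (x O). rewrite x0p. replace (Cminus p p) with (RtoC 0) by ring. apply Cmod_0. }
    apply Cmod_eq_0, (f_equal fst) in chord0.
    unfold expi in chord0; simpl in chord0. rewrite cos_PI in chord0. lra.
  - intros eps eps_pos.
    destruct (exists_halved_angle_lt eps eps_pos) as [n small].
    exists n. specialize (x_close n). unfold angle in x_close. lra.
Qed.

Lemma S1_mul z w : S1 z -> S1 w -> S1 (Cmult z w).
Proof. unfold S1. intros z_unit w_unit. rewrite Cmod_mult, z_unit, w_unit. ring. Qed.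

Lemma gmap_conj alpha w :
  gmap alpha (Cmult (expi (- alpha)) w)
  = Cmult (expi (- alpha)) (Cmult w w).
Proof.
  unfold gmap, rot, sqmap. change (cos alpha, sin alpha) with (expi alpha).
  transitivity (Cmult (Cmult (expi alpha) (expi (- alpha)))
                      (Cmult (expi (- alpha)) (Cmult w w))); [ring |].
  rewrite expi_opp_r. ring.
Qed.

Theorem mainTheorem1 (alpha : R) (d : C -> C -> R) :
  irrational (alpha / (2 * PI)) ->
  is_metric_on S1 d ->
  induces_std_topology S1 d ->
  Rbar_lt (Finite 1) (Lip_on S1 sqmap d) /\
  Rbar_lt (Finite 1) (Lip_on S1 (gmap alpha) d).
Proof.
  intros _ d_metric d_std. split.
  - apply (Lip_on_S1_gt_1_of_square_conjugate sqmap 1 d d_metric d_std).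
    + intros z z_unit. now apply S1_mul.
    + unfold S1. rewrite Cmod_1. reflexivity.
    + intro w. unfold sqmap. ring.
  - apply (Lip_on_S1_gt_1_of_square_conjugate (gmap alpha) (expi (- alpha)) d
             d_metric d_std).
    + intros z z_unit. apply S1_mul; [apply Cmod_expi | now apply S1_mul].
    + apply Cmod_expi.
    + apply gmap_conj.
Qed.
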